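(* For every integer $n\ge 1$, $$\sum_{i=1}^{2^{n}}e(i)=\frac{1}{36}\Bigl((6n-7)2^{n+2}+18n+27+(-1)^{n}\Bigr).$$
   Context: The Stern polynomials $B_n(t)\in\mathbb{Z}[t]$, $n\ge 0$, are defined by $B_0(t)=0$, $B_1(t)=1$, $B_{2n}(t)=tB_n(t)$ and $B_{2n+1}(t)=B_n(t)+B_{n+1}(t)$ for $n\ge 1$. For $n\ge 1$, $e(n)=\deg_t B_n(t)$. *)

From HB Require Import structures.
From mathcomp Require Import all_boot all_order all_algebra.
Set Implicit Arguments. Unset Strict Implicit. Unset Printing Implicit Defensive.
Import Order.TTheory GRing.Theory Num.Theory.
Local Open Scope ring_scope.

Fixpoint stern_fuel (k n : nat) : {poly int} :=
  match k with
  | 0 => 0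
  | k'.+1 =>
      if n == 0%N then 0
      else if n == 1%N then 1
      else if odd n then stern_fuel k' n./2 + stern_fuel k' (n./2).+1
      else 'X * stern_fuel k' n./2
  end.

(* Stern polynomial B_n(t) in Z[t]; fuel n suffices since arguments strictly decrease. *)
Definition stern (n : nat) : {poly int} := stern_fuel n n.

(* e(n) = deg_t B_n(t); degree = size - 1 in MathComp. *)
Definition e (n : nat) : nat := (size (stern n)).-1.

Lemma stern0 : stern 0 = 0. Proof. by []. Qed.

From HB Require Import structures.
From mathcomp Require Import all_boot all_order all_algebra.
From mathcomp Require Import zify ring.
Import Order.TTheory GRing.Theory Num.Theory.
Local Open Scope ring_scope.

(* 1. The fuelled definition satisfies the Stern recursion, so that
      B_{2k} = t B_k and B_{2k+1} = B_k + B_{k+1}; all B_k (k >= 1) are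
      nonzero with nonnegative coefficients, hence no cancellation occurs
      and e(2k) = e(k) + 1, e(2k+1) = max(e(k), e(k+1)).  Consequently
      consecutive degrees differ by at most one.
   2. Write L_m(F) for the sum of F over the dyadic block [2^m, 2^(m+1)).
      The block m+1 consists of the children 2j, 2j+1 of block m, so the
      recursion for e gives linear recurrences between the block sums of
      e, of M(j) = max(e(j), e(j+1)) and of the indicator Z(j) = [e(j) = e(j+1)]:
        L_{m+1}(Z) + L_m(Z) = 2^m,
        L_{m+1}(M) = 2 L_m(M) + 2^m + L_m(Z),
        L_{m+1}(e) = L_m(e) + 2^m + L_m(M).
   3. Solving these recurrences over Q and summing the blocks m < n gives
      the sum over [1, 2^n); adding e(2^n) = n yields the theorem. *)

Lemma stern_fuel_enough k k' n :
  (n <= k)%N -> (n <= k')%N -> stern_fuel k n = stern_fuel k' n.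
Proof.
elim: k k' n => [|k IH] [|k'] n /=; rewrite ?leqn0.
- by move=> /eqP->.
- by move=> /eqP->.
- by move=> _ /eqP->.
move=> hk hk'; case: eqP => // /eqP n0; case: eqP => // /eqP n1.
have := odd_double_half n; rewrite -mul2n.
case: ifP => _ /= hn.
- by rewrite (IH k') ?(IH k' n./2.+1) //; lia.
- by rewrite (IH k') //; lia.
Qed.

Lemma stern_rec n : (2 <= n)%N -> stern n =
  if odd n then stern n./2 + stern n./2.+1 else 'X * stern n./2.
Proof.
case: n => [|n] // n2; rewrite /stern [in LHS]/=.
rewrite -[uphalf n]/(n.+1./2) -[~~ odd n]/(odd n.+1).
have -> : (n.+1 == 1%N) = false by lia.
have := odd_double_half n.+1; rewrite -mul2n.
case: ifP => _ /= hn.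
- by rewrite (stern_fuel_enough n (n.+1./2)) ?(stern_fuel_enough n (n.+1./2.+1)) //; lia.
- by rewrite (stern_fuel_enough n (n.+1./2)) //; lia.
Qed.

Lemma stern1 : stern 1 = 1.
Proof. by []. Qed.

Lemma stern_even k : (0 < k)%N -> stern k.*2 = 'X * stern k.
Proof. by move=> k0; rewrite stern_rec ?odd_double ?doubleK //; lia. Qed.

Lemma stern_odd k : (0 < k)%N -> stern k.*2.+1 = stern k + stern k.+1.
Proof.
by move=> k0; rewrite stern_rec /= ?odd_double ?uphalf_double //; lia.
Qed.

Definition nonneg_poly (p : {poly int}) := forall i, 0 <= p`_i.

(* Adding a nonnegative polynomial cannot lower the degree of another one:
   the leading coefficient of p stays positive. *)
Lemma size_le_add_nonneg p q :
  nonneg_poly p -> nonneg_poly q -> (size p <= size (p + q)%R)%N.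
Proof.
move=> hp hq; have [->|p0] := eqVneq p 0; first by rewrite size_poly0.
have sp : (0 < size p)%N by rewrite size_poly_gt0.
rewrite -(prednK sp) ltnNge; apply/negP => /leq_sizeP /(_ _ (leqnn _)).
have lp : p`_(size p).-1 != 0 by rewrite -lead_coefE lead_coef_eq0.
rewrite coefD; have := hq (size p).-1; have := hp (size p).-1; move: lp; lia.
Qed.

Lemma size_add_nonneg p q : nonneg_poly p -> nonneg_poly q ->
  size (p + q) = maxn (size p) (size q).
Proof.
move=> hp hq; apply/eqP; rewrite eqn_leq size_polyD geq_max.
by rewrite size_le_add_nonneg //= addrC size_le_add_nonneg.
Qed.

Lemma stern_pos {n} : (0 < n)%N -> stern n != 0 /\ nonneg_poly (stern n).
Proof.
elim/ltn_ind: n => n IH n0; have [n1|n2] := leqP n 1.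
  have -> : n = 1%N by lia.
  by rewrite stern1; split => [|i]; rewrite ?oner_eq0 // coefC; case: eqP.
have k0 : (0 < n./2)%N by lia.
have [a0 ha] := IH n./2 ltac:(lia) k0.
have := odd_double_half n; case: (odd n) => /= hn; rewrite -hn.
- rewrite stern_odd //; have [b0 hb] := IH n./2.+1 ltac:(lia) isT.
  split; last by move=> i; rewrite coefD addr_ge0.
  by rewrite -size_poly_eq0 size_add_nonneg // -lt0n leq_max size_poly_gt0 a0.
- rewrite add0n stern_even //; split; first by rewrite mulf_neq0 ?polyX_eq0.
  by move=> i; rewrite coefXM; case: eqP.
Qed.

Lemma e1 : e 1 = 0%N.
Proof. by rewrite /e stern1 size_poly1. Qed.

Lemma e_even k : (0 < k)%N -> e k.*2 = (e k).+1.
Proof.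
move=> k0; have [p0 _] := stern_pos k0.
by rewrite /e stern_even // mulrC size_mulX // prednK // size_poly_gt0.
Qed.

Lemma e_odd k : (0 < k)%N -> e k.*2.+1 = maxn (e k) (e k.+1).
Proof.
move=> k0; have [p0 hp] := stern_pos k0; have [q0 hq] := stern_pos (ltn0Sn k).
rewrite /e stern_odd // size_add_nonneg //.
by move: p0 q0; rewrite -!size_poly_eq0; lia.
Qed.

(* e(2^n) = n, since B_{2^n} = t^n. *)
Lemma e_pow2 n : e (2 ^ n) = n.
Proof. by elim: n => [|n IH]; rewrite ?e1 // expnS mul2n e_even ?IH ?expn_gt0. Qed.

Section Degrees.
Local Open Scope nat_scope.

Lemma e2 : e 2 = 1.
Proof. by rewrite -[2]/(1.*2) e_even // e1. Qed.

Lemma e_step {j} : 0 < j -> e j <= e j.+1 + 1 /\ e j.+1 <= e j + 1.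
Proof.
elim/ltn_ind: j => j IH j0; have [j1|j2] := leqP j 1.
  have -> : j = 1 by lia.
  by rewrite e2 e1.
have k0 : 0 < j./2 by lia.
have step := IH j./2 ltac:(lia) k0; have := odd_double_half j.
case: (odd j) => /= <-.
- by rewrite -[_.*2.+2]/(j./2.+1).*2 e_odd // e_even //; lia.
- by rewrite add0n e_odd // e_even //; lia.
Qed.

Definition flat (j : nat) : nat := e j == e j.+1.
Definition maxe (j : nat) : nat := maxn (e j) (e j.+1).

Lemma e_odd_next j : 0 < j -> e j.*2.+2 = (e j.+1).+1.
Proof. by move=> j0; rewrite -doubleS e_even. Qed.

(* Sums over the children 2j, 2j+1 of a node j >= 1; the first two use that
   consecutive degrees differ by at most one. *)
Lemma flat_children j : 0 < j -> flat j.*2 + flat j.*2.+1 + flat j = 1.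
Proof.
move=> j0; rewrite /flat e_odd_next // e_even // e_odd //.
by have := e_step j0; do ! case: eqP; lia.
Qed.

Lemma maxe_children j : 0 < j ->
  maxe j.*2 + maxe j.*2.+1 = maxe j + maxe j + 1 + flat j.
Proof.
move=> j0; rewrite /flat /maxe e_odd_next // e_even // e_odd //.
by have := e_step j0; case: eqP; lia.
Qed.

Lemma e_children j : 0 < j -> e j.*2 + e j.*2.+1 = e j + 1 + maxe j.
Proof. by move=> j0; rewrite /maxe e_even // e_odd //; lia. Qed.

Definition level (F : nat -> nat) (m : nat) : nat :=
  \sum_(2 ^ m <= j < 2 ^ m.+1) F j.

Lemma level0 F : level F 0 = F 1.
Proof. by rewrite /level big_nat1. Qed.

Lemma level_const c m : level (fun=> c) m = c * 2 ^ m.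
Proof. by rewrite /level sum_nat_const_nat expnS; lia. Qed.

Lemma level_add F G m : level (fun j => F j + G j) m = level F m + level G m.
Proof. exact: big_split. Qed.

Lemma sum_double (F : nat -> nat) a b : a <= b ->
  \sum_(a.*2 <= j < b.*2) F j = \sum_(a <= j < b) (F j.*2 + F j.*2.+1).
Proof.
move=> /subnK <-; elim: (b - a) => [|k IH]; first by rewrite add0n !big_geq.
by rewrite addSn doubleS !big_nat_recr //=; lia.
Qed.

Lemma level_ext F G m : (forall j, 0 < j -> F j = G j) -> level F m = level G m.
Proof.
move=> FG; apply: eq_big_nat => j /andP[hj _].
by apply: FG; apply: leq_trans hj; rewrite expn_gt0.
Qed.

Lemma level_double F m : level F m.+1 = level (fun j => F j.*2 + F j.*2.+1) m.
Proof. by rewrite /level (expnS 2 m.+1) (expnS 2 m) !mul2n sum_double //; lia. Qed.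

Lemma sum_levels F n : \sum_(1 <= i < 2 ^ n) F i = \sum_(m < n) level F m.
Proof.
elim: n => [|n IH]; first by rewrite big_geq // big_ord0.
rewrite big_ord_recr /= -IH /level -big_cat_nat ?leq_exp2l ?expn_gt0 //.
Qed.

Lemma level_flat_rec m : level flat m.+1 + level flat m = 2 ^ m.
Proof.
rewrite level_double -level_add -[2 ^ m]mul1n -level_const.
exact: level_ext flat_children.
Qed.

Lemma level_maxe_rec m :
  level maxe m.+1 = 2 * level maxe m + 2 ^ m + level flat m.
Proof.
rewrite level_double -[2 ^ m]mul1n -level_const mul2n -addnn -!level_add.
exact: level_ext maxe_children.
Qed.

Lemma level_e_rec m : level e m.+1 = level e m + 2 ^ m + level maxe m.
Proof.
rewrite level_double -[2 ^ m]mul1n -level_const -!level_add.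
exact: level_ext e_children.
Qed.

End Degrees.

Lemma level_flatE m : ((level flat m)%:R : rat) = (2 ^+ m - (-1) ^+ m) / 3.
Proof.
elim: m => [|m IH]; first by rewrite level0 /flat e1 e2.
rewrite -[LHS](addrK (level flat m)%:R) -natrD level_flat_rec natrX IH !exprS.
by field.
Qed.

Lemma level_maxeE m :
  ((level maxe m)%:R : rat) = ((6 * m%:R + 8) * 2 ^+ m + (-1) ^+ m) / 9.
Proof.
elim: m => [|m IH]; first by rewrite level0 /maxe e1 e2.
rewrite level_maxe_rec 2!natrD natrM natrX IH level_flatE !exprS -natr1.
by field.
Qed.

Lemma level_eE m : ((level e m)%:R : rat) =
  (6 * m%:R + 5) * 2 ^+ m / 9 - (-1) ^+ m / 18 - 1 / 2.
Proof.
elim: m => [|m IH]; first by rewrite level0 e1; field.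
rewrite level_e_rec !natrD natrX IH level_maxeE !exprS -natr1.
by field.
Qed.

Lemma sum_e_below_pow2 n : ((\sum_(1 <= i < 2 ^ n) e i)%N%:R : rat) =
  (6 * n%:R - 7) * 2 ^+ n / 9 + (-1) ^+ n / 36 - n%:R / 2 + 3 / 4.
Proof.
rewrite sum_levels; elim: n => [|n IH]; first by rewrite big_ord0; field.
rewrite big_ord_recr /= natrD IH level_eE !exprS -natr1.
by field.
Qed.

Theorem corollary4p7 (n : nat) (hn : (1 <= n)%N) :
  ((\sum_(1 <= i < (2 ^ n).+1) e i)%N%:R : rat) =
  (1 / 36) * ((6 * n%:R - 7) * 2 ^+ (n + 2) + 18 * n%:R + 27 + (-1) ^+ n).
Proof.
rewrite big_nat_recr /= ?expn_gt0 // natrD sum_e_below_pow2 e_pow2 exprD.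
by field.
Qed.
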